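(* Let $K$ be a field of characteristic $0$, let $a\in K^*$ and let $P_t(x)\in K[t,x]$ be a polynomial of degree $4$ in $x$ and of even degree $d$ in $t$, with associated Châtelet surface bundle $f:V\to\mathbb{P}^1$ and degeneracy locus $\mathrm{De}(V)\subset\mathbb{P}^1\times\mathbb{P}^1$. For each closed point $\theta\in\mathbb{P}^1$, the fibre $V_\theta$ is smooth over the residue field $K(\theta)$ if and only if $\theta$ does not lie in the branch locus $\mathfrak{B}\subset\mathbb{P}^1$ of the first projection $\mathrm{pr}_1:\mathrm{De}(V)\to\mathbb{P}^1$. This is also equivalent to the condition that $P_\theta(x)\in K(\theta)[x]$ and $P_\theta^*(x')=x'^4P_\theta(1/x')\in K(\theta)[x']$ are both separable polynomials.
   Context: Let $\tilde P_{t,t'}(x,x')=x'^4t'^dP_{t/t'}(x/x')$ be the bihomogenisation of $P_t(x)$. $V$ is the projective variety obtained by gluing the hypersurfaces $Y^2-aZ^2=W_{\infty\infty}^2\tilde P_{t,1}(x,1)$, $Y^2-aZ^2=W_{\infty0}^2\tilde P_{t,1}(1,x')$, $Y^2-aZ^2=W_{0\infty}^2\tilde P_{1,t'}(x,1)$, $Y^2-aZ^2=W_{00}^2\tilde P_{1,t'}(1,x')$ over the four standard affine opens of $\mathbb{P}^1\times\mathbb{P}^1$ (coordinates $t,t'=1/t$ and $x,x'=1/x$), times $\mathbb{P}^2$, via $W_{\infty\infty}=W_{\infty0}x'^2=W_{0\infty}t'^{d/2}=W_{00}x'^2t'^{d/2}$, $W_{\infty0}=W_{0\infty}x^2t'^{d/2}=W_{00}t'^{d/2}$,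 $W_{0\infty}=W_{00}x'^2$; $f$ is the composite of the projection to $\mathbb{P}^1\times\mathbb{P}^1$ with the first projection. For $\theta\neq\infty$, $P_\theta(x)$ denotes the specialization of $P_t(x)$ at $t=\theta$ and $V_\theta$ is the fibre $y^2-az^2=P_\theta(x)$; for $\theta=\infty$, $P_\infty(x)$ is obtained by setting $t'=0$ in $t'^dP_{1/t'}(x)$. $\mathrm{De}(V)$ is the curve $\tilde P_{t,t'}(x,x')=0$. *)

From HB Require Import structures.
From mathcomp Require Import all_boot all_order all_algebra all_field.
From mathcomp Require Import mpoly.

Set Implicit Arguments.
Unset Strict Implicit.
Unset Printing Implicit Defensive.

Import GRing.Theory.
Local Open Scope ring_scope.

(* P_t(x) in K[t,x] is represented as a polynomial in x whose coefficients
   are polynomials in t:  P = \sum_i c_i(t) x^i,  P : {poly {poly K}}. *)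

Definition tdeg (K : fieldType) (P : {poly {poly K}}) : nat :=
  (\max_(i < size P) (size (nth 0%R P i)).-1)%N.

(* P_theta(x) in K(theta)[x], for a finite closed point theta, where
   K(theta) = L is generated over K by theta. *)
Definition Pspec (K : fieldType) (L : fieldExtType K) (theta : L)
    (P : {poly {poly K}}) : {poly L} :=
  map_poly (fun c : {poly K} => (map_poly (in_alg L) c).[theta]) P.

(* P_infty(x): set t' = 0 in t'^d P_{1/t'}(x), i.e. take the coefficient
   of t^d of every x-coefficient of P. *)
Definition Pinf (K : fieldType) (P : {poly {poly K}}) : {poly K} :=
  map_poly (fun c : {poly K} => c`_(tdeg P)) P.

(* p^*(x') = x'^4 p(1/x')  (for p of degree <= 4) *)
Definition recip4 (F : fieldType) (p : {poly F}) : {poly F} :=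
  \poly_(i < 5) p`_(4 - i).

Definition vx : 'I_4 := @inord 3 0.
Definition vY : 'I_4 := @inord 3 1.
Definition vZ : 'I_4 := @inord 3 2.
Definition vW : 'I_4 := @inord 3 3.

(* the equation Y^2 - a Z^2 - W^2 p(x) of a chart of the Chatelet surface
   Y^2 - a Z^2 = W^2 p(x) in A^1 x P^2 *)
Definition chatelet_eq (M : fieldType) (a : M) (p : {poly M}) : {mpoly M[4]} :=
  'X_vY ^+ 2 - a *: 'X_vZ ^+ 2
  - 'X_vW ^+ 2 * (\sum_(i < size p) p`_i *: 'X_vx ^+ i).

(* v = (x, Y, Z, W) with (Y:Z:W) in P^2 is a singular point of the surface
   (Jacobian criterion). *)
Definition singular_point (M : fieldType) (a : M) (p : {poly M})
    (v : 'I_4 -> M) : Prop :=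
  let G := chatelet_eq a p in
  [/\ (v vY, v vZ, v vW) != (0, 0, 0),
      G.@[v] = 0 &
      forall i : 'I_4, (G^`M(i)).@[v] = 0].

(* The fibre V_theta over the residue field F = K(theta), glued from the
   charts  Y^2 - aZ^2 = W^2 p(x)  and  Y^2 - aZ^2 = W'^2 p^*(x'),
   is smooth over F: it has no singular point over any field extension M
   of F (i.e. it is geometrically regular). *)
Definition smooth_fibre (F : fieldType) (a : F) (p : {poly F}) : Prop :=
  forall (M : fieldType) (iota : {rmorphism F -> M}) (v : 'I_4 -> M),
    ~ singular_point (iota a) (map_poly iota p) v /\
    ~ singular_point (iota a) (map_poly iota (recip4 p)) v.

(* theta lies in the branch locus of pr_1 : De(V) -> P^1: the fibre of
   De(V) over theta (given in the two charts by p(x) = 0 and p^*(x') = 0,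
   where p = P_theta) has a geometric point at which pr_1 is ramified,
   i.e. at which the derivative of the local equation in the fibre
   coordinate vanishes. *)
Definition in_branch_locus (F : fieldType) (p : {poly F}) : Prop :=
  exists (M : fieldType) (iota : {rmorphism F -> M}) (x0 : M),
    (root (map_poly iota p) x0 /\ root (map_poly iota p)^`() x0) \/
    (root (map_poly iota (recip4 p)) x0 /\
     root (map_poly iota (recip4 p))^`() x0).

(* By the Jacobian criterion, a singular point of Y^2 - a Z^2 = W^2 p(x) has
   2Y = 0 and 2aZ = 0, so Y = Z = 0 when char K <> 2 and a <> 0; then W <> 0
   and the remaining equations p(x) W^2 = 0, 2W p(x) = 0 and W^2 p'(x) = 0
   say that x is a common root of p and p'.  Conversely such a root x gives
   the singular point (x, 0, 0, 1).  Hence V_theta is smooth iff neither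
   P_theta nor P_theta^* has a multiple root in any extension, which is the
   branch-locus condition; and p has no multiple root in any extension iff
   gcd(p, p') is constant, since a nonconstant gcd acquires a root in the
   field obtained by adjoining a root of one of its irreducible factors.
   Only a <> 0 and 2 <> 0 in K(theta) are used. *)

From HB Require Import structures.
From mathcomp Require Import all_boot all_order all_algebra all_field.
From mathcomp Require Import mpoly.
From Stdlib Require Import Classical.
Set Implicit Arguments.
Unset Strict Implicit.
Unset Printing Implicit Defensive.

Import GRing.Theory.
Local Open Scope ring_scope.

Section RootsInExtensions.

Variable F : fieldType.
Implicit Types p r : {poly F}.

Lemma exists_irreducible_dvdp r :
  (1 < size r)%N -> exists2 s, irreducible_poly s & s %| r.
Proof.
have [n] := ubnP (size r); elim: n r => // n IH r /ltnSE le_r_n r_gt1.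
have [irr_r | red_r] := classic (irreducible_poly r); first by exists r.
have [q /and3P[q_ne1 q_r qNr]] :
    exists q : {poly F}, [&& size q != 1%N, q %| r & ~~ (q %= r)].
  apply: NNPP => no_q; apply: red_r; split=> // q q_ne1 q_r.
  by apply: contraT => qNr; case: no_q; exists q; rewrite q_ne1 q_r.
have r_neq0 : r != 0 by rewrite -size_poly_gt0 (ltn_trans _ r_gt1).
have q_neq0 : q != 0 by apply: contraTneq q_r => ->; rewrite dvd0p.
have lt_q_r : (size q < size r)%N.
  by rewrite ltn_neqAle dvdp_leq // dvdp_size_eqp // qNr.
have q_gt1 : (1 < size q)%N by rewrite ltn_neqAle eq_sym q_ne1 size_poly_gt0.
have [s irr_s s_q] := IH q (leq_trans lt_q_r le_r_n) q_gt1.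
by exists s => //; apply: dvdp_trans s_q q_r.
Qed.

Lemma exists_root_in_extension r : size r != 1%N ->
  exists (M : fieldType) (iota : {rmorphism F -> M}) (x : M),
    root (map_poly iota r) x.
Proof.
have [-> _ | r_neq0 r_ne1] := eqVneq r 0.
  by exists F, idfun, 0; rewrite map_poly0 root0.
have r_gt1 : (1 < size r)%N by rewrite ltn_neqAle eq_sym r_ne1 size_poly_gt0.
have [s irr_s s_r] := exists_irreducible_dvdp r_gt1.
have [L _ [z z_root _]] := irredp_FAdjoin irr_s.
by exists L, (in_alg L), z; apply: root_dvdp z_root; rewrite dvdp_map.
Qed.

Definition has_multiple_root p : Prop :=
  exists (M : fieldType) (iota : {rmorphism F -> M}) (x : M),
    root (map_poly iota p) x /\ root (map_poly iota p)^`() x.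

Lemma separable_poly_no_multiple_root p :
  separable_poly p <-> ~ has_multiple_root p.
Proof.
rewrite unlock; split=> [sep_p [M [iota [x [px p'x]]]] | no_mroot].
  have /coprimep_root/(_ px) : coprimep (map_poly iota p) (map_poly iota p)^`().
    by rewrite deriv_map coprimep_map.
  by rewrite (eqP p'x) eqxx.
apply: contraT => /exists_root_in_extension[M [iota [x gx]]].
case: no_mroot; exists M, iota, x; rewrite deriv_map.
by split; apply: root_dvdp gx; rewrite dvdp_map ?dvdp_gcdl ?dvdp_gcdr.
Qed.

End RootsInExtensions.

Section UnivariateMpoly.

Variables (R : comNzRingType) (n : nat).
Implicit Types (i j : 'I_n) (q : {poly R}) (v : 'I_n -> R).

Lemma mderivXU i j : ('X_i : {mpoly R[n]})^`M(j) = (i == j)%:R.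
Proof.
rewrite mderivX mnm1E; case: eqP => [->|_]; last by rewrite scale0r.
rewrite (_ : U_(j) - U_(j) = 0)%MM ?mpolyX0 ?scale1r //.
by apply/mnmP => k; rewrite mnmBE subnn mnm0E.
Qed.

Lemma mderivXn i j k :
  (('X_i : {mpoly R[n]}) ^+ k)^`M(j) = ('X_i ^+ k.-1 *+ k) *+ (i == j).
Proof.
elim: k => [|k IH]; first by rewrite expr0 mderivC mul0rn.
rewrite exprSr mderivM IH mderivXU.
case: (i == j); last by rewrite !mulr0n mul0r mulr0 addr0.
case: k {IH} => [|k]; first by rewrite mul0rn mul0r add0r mulr1.
by rewrite /= !mulr1n mulr1 mulrnAl -exprSr [in RHS]mulrSr.
Qed.

Definition mpoly_of_poly i q : {mpoly R[n]} :=
  \sum_(k < size q) q`_k *: 'X_i ^+ k.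

Lemma meval_mpoly_of_poly i q v : (mpoly_of_poly i q).@[v] = q.[v i].
Proof.
rewrite /mpoly_of_poly raddf_sum horner_coef; apply: eq_bigr => k _.
by rewrite /= mevalZ rmorphXn /= mevalXU.
Qed.

Lemma mderiv_mpoly_of_poly_neq i j q :
  i != j -> (mpoly_of_poly i q)^`M(j) = 0.
Proof.
move=> /negbTE neq_ij; rewrite raddf_sum big1 // => k _.
by rewrite /= mderivZ mderivXn neq_ij scaler0.
Qed.

Lemma meval_mderiv_mpoly_of_poly i q v :
  ((mpoly_of_poly i q)^`M(i)).@[v] = q^`().[v i].
Proof.
have [-> | q_neq0] := eqVneq q 0.
  by rewrite /mpoly_of_poly size_poly0 big_ord0 raddf0 meval0 deriv0 horner0.
have size_q' : (size q^`() <= (size q).-1)%N.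
  by rewrite -ltnS prednK ?lt_size_deriv // size_poly_gt0.
rewrite (raddf_sum (mderiv i)) raddf_sum (horner_coef_wide _ size_q').
case: (size q) => [|m]; first by rewrite !big_ord0.
rewrite big_ord_recl /= mderivZ mderivXn mul0rn scaler0 meval0 add0r.
apply: eq_bigr => k _.
rewrite /= mderivZ mderivXn eqxx mulr1n mevalZ mevalMn rmorphXn /= mevalXU.
by rewrite coef_deriv /bump /= add1n mulrnAr mulrnAl.
Qed.

End UnivariateMpoly.

Lemma chatelet_vars_neq :
  ((vx == vY) = false) * ((vx == vZ) = false) * ((vx == vW) = false) *
  ((vY == vx) = false) * ((vY == vZ) = false) * ((vY == vW) = false) *
  ((vZ == vx) = false) * ((vZ == vY) = false) * ((vZ == vW) = false) *
  ((vW == vx) = false) * ((vW == vY) = false) * ((vW == vZ) = false).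
Proof. by rewrite /vx /vY /vZ /vW -!(inj_eq val_inj) /= !inordK. Qed.

Lemma chatelet_var_cases (i : 'I_4) : [\/ i = vx, i = vY, i = vZ | i = vW].
Proof.
have valK k (lt_k4 : (k < 4)%N) : Ordinal lt_k4 = inord k.
  by apply: val_inj; rewrite /= inordK.
case: i => -[|[|[|[|//]]]] lt_i4; rewrite valK.
- by constructor 1.
- by constructor 2.
- by constructor 3.
- by constructor 4.
Qed.

Section ChateletSurface.

Variables (M : fieldType) (b : M) (q : {poly M}).
Implicit Type v : 'I_4 -> M.

Local Notation G := (chatelet_eq b q).

Lemma meval_chatelet_eq v :
  G.@[v] = v vY ^+ 2 - b * v vZ ^+ 2 - v vW ^+ 2 * q.[v vx].
Proof.
rewrite /chatelet_eq -/(mpoly_of_poly vx q) !mevalB mevalZ !mevalM.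
by rewrite meval_mpoly_of_poly !mevalXU -!expr2.
Qed.

Lemma meval_grad_chatelet_eq v :
  [/\ (G^`M(vY)).@[v] = v vY *+ 2,
      (G^`M(vZ)).@[v] = - (b * v vZ *+ 2),
      (G^`M(vW)).@[v] = - (v vW * q.[v vx] *+ 2)
    & (G^`M(vx)).@[v] = - (v vW ^+ 2 * q^`().[v vx])].
Proof.
rewrite /chatelet_eq -/(mpoly_of_poly vx q) !mderivB !mderivZ.
rewrite !(mderivM _ ('X_vW ^+ 2)) !mderivXn !eqxx !chatelet_vars_neq /=.
rewrite !mulr0n !mulr1n scaler0 !mul0r; split; last first.
  rewrite !(subr0, add0r) mevalN mevalM meval_mderiv_mpoly_of_poly.
  by rewrite rmorphXn /= mevalXU.
all: rewrite mderiv_mpoly_of_poly_neq ?chatelet_vars_neq // mulr0.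
all: rewrite ?(subr0, add0r, sub0r, addr0) ?mevalN ?mevalZ ?mevalM mevalMn.
all: by rewrite ?meval_mpoly_of_poly expr1 mevalXU ?mulrnAl ?mulrnAr.
Qed.

Lemma chatelet_singular_pointP : b != 0 -> 2%:R != 0 :> M ->
  (exists v, singular_point b q v) <-> exists x, root q x /\ root q^`() x.
Proof.
move=> b_neq0 two_neq0.
have mul2_eq0 (x : M) : (x *+ 2 == 0) = (x == 0).
  by rewrite -mulr_natr mulf_eq0 (negbTE two_neq0) orbF.
split=> [[v [v_neq0 _ grad0]] | [x [qx q'x]]].
  have [dY dZ dW dx] := meval_grad_chatelet_eq v.
  move: (grad0 vY) (grad0 vZ) (grad0 vW) (grad0 vx); rewrite dY dZ dW dx.
  move=> /eqP; rewrite mul2_eq0 => /eqP vY0.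
  move=> /eqP; rewrite oppr_eq0 mul2_eq0 mulf_eq0 (negbTE b_neq0) => /eqP vZ0.
  have vW_neq0 : v vW != 0 by apply: contra_neq v_neq0 => ->; rewrite vY0 vZ0.
  move=> /eqP; rewrite oppr_eq0 mul2_eq0 mulf_eq0 (negbTE vW_neq0) => qx.
  move=> /eqP; rewrite oppr_eq0 mulf_eq0 expf_eq0 (negbTE vW_neq0) andbF => q'x.
  by exists (v vx).
pose v i := if i == vx then x else if i == vW then 1 else 0.
have [vx_x vY0 vZ0 vW1] : [/\ v vx = x, v vY = 0, v vZ = 0 & v vW = 1].
  by rewrite /v !chatelet_vars_neq !eqxx.
have [dY dZ dW dx] := meval_grad_chatelet_eq v.
rewrite vx_x vY0 vZ0 (eqP qx) (eqP q'x) !(mul0rn, mulr0, oppr0) in dY dZ dW dx.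
exists v; split.
- by rewrite vY0 vZ0 vW1; apply/eqP; case=> /eqP; rewrite oner_eq0.
- by rewrite meval_chatelet_eq vY0 vZ0 vx_x (eqP qx) !expr2 !(mulr0, subr0).
- by move=> i; case: (chatelet_var_cases i) => ->.
Qed.

End ChateletSurface.

Section ChateletFibre.

Variable F : fieldType.
Implicit Type p : {poly F}.

Lemma in_branch_locusE p :
  in_branch_locus p <-> has_multiple_root p \/ has_multiple_root (recip4 p).
Proof.
split=> [[M [iota [x [px | rx]]]] | [[M [iota [x px]]] | [M [iota [x rx]]]]].
- by left; exists M, iota, x.
- by right; exists M, iota, x.
- by exists M, iota, x; left.
- by exists M, iota, x; right.
Qed.

Lemma not_in_branch_locusP p :
  ~ in_branch_locus p <-> separable_poly p /\ separable_poly (recip4 p).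
Proof. by rewrite in_branch_locusE !separable_poly_no_multiple_root; tauto. Qed.

Lemma smooth_fibreP (a : F) p : a != 0 -> 2%:R != 0 :> F ->
  smooth_fibre a p <-> ~ in_branch_locus p.
Proof.
move=> a_neq0 two_neq0.
have singularP (M : fieldType) (iota : {rmorphism F -> M}) r :
    (exists v, singular_point (iota a) (map_poly iota r) v) <->
    exists x, root (map_poly iota r) x /\ root (map_poly iota r)^`() x.
  apply: chatelet_singular_pointP; first by rewrite fmorph_eq0.
  by rewrite -(rmorph_nat iota) fmorph_eq0.
rewrite in_branch_locusE.
split=> [smooth [] [M [iota [x mroot]]] | no_mroot M iota v].
- have [v sing_v] := (singularP M iota p).2 (ex_intro _ x mroot).
  by have := smooth M iota v; tauto.
- have [v sing_v] := (singularP M iota (recip4 p)).2 (ex_intro _ x mroot).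
  by have := smooth M iota v; tauto.
split=> [/(ex_intro _ v)/singularP | /(ex_intro _ v)/singularP] [x mroot].
  by apply: no_mroot; left; exists M, iota, x.
by apply: no_mroot; right; exists M, iota, x.
Qed.

End ChateletFibre.

Theorem lemma2p3 (K : fieldType) (charK0 : [pchar K] =i pred0)
    (a : K) (a_neq0 : a != 0) (P : {poly {poly K}})
    (degx4 : size P = 5%N) (deg_t_even : ~~ odd (tdeg P)) :
  (* finite closed points theta, with residue field L = K(theta) *)
  (forall (L : fieldExtType K) (theta : L), <<1%VS; theta>>%VS = fullv ->
     (smooth_fibre (in_alg L a) (Pspec theta P) <->
        ~ in_branch_locus (Pspec theta P)) /\
     (~ in_branch_locus (Pspec theta P) <->
        separable_poly (Pspec theta P) /\
        separable_poly (recip4 (Pspec theta P)))) /\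
  (* the point theta = infinity, with residue field K *)
  ((smooth_fibre a (Pinf P) <-> ~ in_branch_locus (Pinf P)) /\
   (~ in_branch_locus (Pinf P) <->
      separable_poly (Pinf P) /\ separable_poly (recip4 (Pinf P)))).
Proof.
have two_neq0 : 2%:R != 0 :> K by have := charK0 2; rewrite !inE /= => /negbT.
split=> [L theta _ | ]; split; try exact: not_in_branch_locusP.
  apply: smooth_fibreP; first by rewrite fmorph_eq0.
  by rewrite -(rmorph_nat (in_alg L)) fmorph_eq0.
exact: smooth_fibreP.
Qed.
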